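(* Let $X$ be a metric space, let $A\subseteq X$ be nonempty and let $Y$ be a hyperconvex metric space. Then the multivalued mapping $\Phi:\mathcal{N}(A,Y)\to\mathcal{P}(\mathcal{N}(X,Y))$, assigning to each $f$ the set of all $f'\in\mathcal{N}(X,Y)$ with $f'|_A=f$, is nonexpansive, i.e. $H(\Phi(f),\Phi(g))\le d_\infty(f,g)$ for all $f,g\in\mathcal{N}(A,Y)$.
   Context: A metric space $Y$ is hyperconvex if $\bigcap_\alpha B(x_\alpha,r_\alpha)\ne\emptyset$ for every family of points $x_\alpha\in Y$ and radii $r_\alpha>0$ with $d(x_\alpha,x_\beta)\le r_\alpha+r_\beta$ for all $\alpha,\beta$ ($B$ denotes closed balls). $\mathcal{N}(A,Y)$ is the set of bounded nonexpansive maps $A\to Y$ with the supremum metric $d_\infty$; $H$ is the Pompeiu–Hausdorff distance in $(\mathcal{N}(X,Y),d_\infty)$: $H(B,C)=\max\{\sup_{b\in B}\mathrm{dist}(b,C),\sup_{c\in C}\mathrm{dist}(c,B)\}$. *)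

From HB Require Import structures.
From mathcomp Require Import all_boot all_order all_algebra.
From mathcomp Require Import all_classical all_reals.
From mathcomp Require Import ereal.
Set Implicit Arguments. Unset Strict Implicit. Unset Printing Implicit Defensive.
Import Order.TTheory GRing.Theory Num.Theory.
Local Open Scope classical_set_scope.
Local Open Scope ring_scope.

Section Defs.
Variable R : realType.

Definition is_metric (T : Type) (d : T -> T -> R) : Prop :=
  [/\ forall x y, d x y = 0 <-> x = y,
      forall x y, d x y = d y x &
      forall x y z, d x z <= d x y + d y z].

Definition hyperconvex (Y : Type) (d : Y -> Y -> R) : Prop :=
  forall (I : Type) (x : I -> Y) (r : I -> R),
    (forall a, 0 < r a) ->
    (forall a b, d (x a) (x b) <= r a + r b) ->
    exists y, forall a, d (x a) y <= r a.

(* f : S -> Y (represented by a function on X, only values on S matter)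
   is bounded and nonexpansive on S *)
Definition bdd_nonexp (X Y : Type) (dX : X -> X -> R) (dY : Y -> Y -> R)
  (S : set X) (f : X -> Y) : Prop :=
  (exists (y0 : Y) (M : R), forall x, S x -> dY (f x) y0 <= M) /\
  (forall x x', S x -> S x' -> dY (f x) (f x') <= dX x x').

Definition dsup (X Y : Type) (dY : Y -> Y -> R) (S : set X) (f g : X -> Y)
  : \bar R := ereal_sup [set (dY (f x) (g x))%:E | x in S].

Definition distset (X Y : Type) (dY : Y -> Y -> R) (b : X -> Y)
  (C : set (X -> Y)) : \bar R :=
  ereal_inf [set dsup dY setT b c | c in C].

Definition hausdorff (X Y : Type) (dY : Y -> Y -> R) (B C : set (X -> Y))
  : \bar R :=
  Order.max (ereal_sup [set distset dY b C | b in B])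
            (ereal_sup [set distset dY c B | c in C]).

Definition Phi (X Y : Type) (dX : X -> X -> R) (dY : Y -> Y -> R)
  (A : set X) (f : X -> Y) : set (X -> Y) :=
  [set f' | bdd_nonexp dX dY setT f' /\ forall x, A x -> f' x = f x].

End Defs.

(* A map f' in Phi(f) is already within d := d_oo(f,g) of g on A, so it suffices
   to extend g from A to a nonexpansive map staying within d + e of f' on all
   of X.  The graphs of nonexpansive partial maps within d + e of f' form an
   inductive family, and hyperconvexity of Y lets a maximal one absorb any
   missing point x0: the balls B(y, d(x0, x)) over the graph, together with
   B(f' x0, d + e), pairwise satisfy the hyperconvexity condition. *)

From HB Require Import structures.
From mathcomp Require Import all_boot all_order all_algebra.
From mathcomp Require Import all_classical all_reals.
From mathcomp Require Import ereal.
From mathcomp Require Import lra.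
Set Implicit Arguments. Unset Strict Implicit. Unset Printing Implicit Defensive.
Import Order.TTheory GRing.Theory Num.Theory.
Local Open Scope classical_set_scope.
Local Open Scope ring_scope.

Section MetricFacts.
Variables (R : realType) (T : Type) (d : T -> T -> R).
Hypothesis hd : is_metric d.

Lemma metricxx x : d x x = 0.
Proof. by case: hd => h _ _; apply: (proj2 (h x x)). Qed.

Lemma metricC x y : d x y = d y x.
Proof. by case: hd. Qed.

Lemma metric_triangle x y z : d x z <= d x y + d y z.
Proof. by case: hd. Qed.

Lemma metric_ge0 x y : 0 <= d x y.
Proof. have := metric_triangle x y x; rewrite metricxx (metricC y x); lra. Qed.

Lemma metric_eq0 x y : d x y = 0 -> x = y.
Proof. by case: hd => h _ _; apply: (proj1 (h x y)). Qed.

Lemma metric_gt0 x y : x <> y -> 0 < d x y.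
Proof.
by move=> nxy; rewrite lt_neqAle metric_ge0 andbT; apply/eqP => /esym/metric_eq0.
Qed.

End MetricFacts.

Arguments metricxx {R T d} hd x.
Arguments metricC {R T d} hd x y.
Arguments metric_triangle {R T d} hd x y z.
Arguments metric_ge0 {R T d} hd x y.
Arguments metric_eq0 {R T d} hd {x y}.
Arguments metric_gt0 {R T d} hd {x y}.

Section NonexpansiveGraphs.
Variables (R : realType) (X Y : Type) (dX : X -> X -> R) (dY : Y -> Y -> R).
Hypotheses (hX : is_metric dX) (hY : is_metric dY).

Definition nonexp_graph (G : set (X * Y)) :=
  forall p q, G p -> G q -> dY p.2 q.2 <= dX p.1 q.1.

Definition graph_near (f : X -> Y) (r : R) (G : set (X * Y)) :=
  forall p, G p -> dY (f p.1) p.2 <= r.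

Lemma nonexp_graph_fun G x y y' : nonexp_graph G -> G (x, y) -> G (x, y') -> y = y'.
Proof.
move=> hG Gy Gy'; apply: (metric_eq0 hY); apply/le_anti.
rewrite (metric_ge0 hY) andbT -(metricxx hX x); exact: hG Gy Gy'.
Qed.

Lemma nonexp_graphU1 G x0 y0 :
  nonexp_graph G -> (forall p, G p -> dY p.2 y0 <= dX p.1 x0) ->
  nonexp_graph (G `|` [set (x0, y0)]).
Proof.
move=> hG hy0 p q [Gp|->] [Gq|->] /=; first exact: hG.
- exact: hy0.
- by rewrite (metricC hY) (metricC hX); exact: hy0.
- by rewrite (metricxx hY) (metricxx hX).
Qed.

Section ExtendNear.
Variables (f : X -> Y) (r : R).
Hypotheses (hYc : hyperconvex dY) (r_gt0 : 0 < r)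
  (f_nonexp : forall x x', dY (f x) (f x') <= dX x x').

Lemma graph_near_extend_point G x0 :
  nonexp_graph G -> graph_near f r G -> ~ (exists y, G (x0, y)) ->
  exists y0, nonexp_graph (G `|` [set (x0, y0)]) /\
             graph_near f r (G `|` [set (x0, y0)]).
Proof.
move=> hG nearG x0_free.
pose I := option {p : X * Y | G p}.
pose center (i : I) := if i is Some p then (sval p).2 else f x0.
pose radius (i : I) := if i is Some p then dX x0 (sval p).1 else r.
have near_center (p : {p : X * Y | G p}) :
    dY (f x0) (sval p).2 <= r + dX x0 (sval p).1.
  case: p => [[x y] Gp] /=; apply: le_trans (metric_triangle hY _ (f x) _) _.
  by have := nearG _ Gp; have := f_nonexp x0 x => /=; lra.
have radius_gt0 i : 0 < radius i.
  case: i => [[[x y] Gp]|] //=; apply: (metric_gt0 hX) => ex.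
  by apply: x0_free; exists y; rewrite ex.
have radius_ok i j : dY (center i) (center j) <= radius i + radius j.
  case: i j => [p|] [q|]; rewrite /center /radius /=.
  - apply: le_trans (hG _ _ (svalP p) (svalP q)) _.
    by rewrite (metricC hX x0); exact: metric_triangle.
  - by rewrite (metricC hY) addrC; exact: near_center.
  - exact: near_center.
  - by rewrite (metricxx hY) addr_ge0 // ltW.
have [y0 hy0] := hYc radius_gt0 radius_ok.
exists y0; split.
- apply: nonexp_graphU1 => // p Gp.
  by have := hy0 (Some (exist _ p Gp)); rewrite /= (metricC hX).
- by move=> p [Gp|->]; [exact: nearG | exact: (hy0 None)].
Qed.

Lemma graph_near_total B :
  nonexp_graph B -> graph_near f r B ->
  exists G, [/\ B `<=` G, nonexp_graph G, graph_near f r G &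
                forall x, exists y, G (x, y)].
Proof.
move=> hB nearB.
(* Graphs are taken modulo B so that the union of the empty chain is admissible. *)
pose P := [set H | nonexp_graph (H `|` B) /\ graph_near f r (H `|` B)].
have [M [[hMB nearMB] Mmax]] : exists M, P M /\ forall M', M `<` M' -> ~ P M'.
  apply: Zorn_bigcup => F FP Ftot; split.
  - move=> p q [[H FH Hp]|Bp] [[H' FH' Hq]|Bq].
    + case: (Ftot _ _ FH FH') => sub.
        by apply: (FP _ FH').1; left => //; apply: sub.
      by apply: (FP _ FH).1; left => //; apply: sub.
    + by apply: (FP _ FH).1; [left|right].
    + by apply: (FP _ FH').1; [right|left].
    + exact: hB.
  - move=> p [[H FH Hp]|Bp]; last exact: nearB.
    by apply: (FP _ FH).2; left.
exists (M `|` B); split => //.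
move=> x0; apply: contrapT => x0_free.
have [y0 [hMBy0 nearMBy0]] := graph_near_extend_point hMB nearMB x0_free.
apply: (Mmax (M `|` [set (x0, y0)])).
  split; first exact: subsetUl.
  by move=> /(_ (x0, y0) (or_intror erefl)) My0; apply: x0_free; exists y0; left.
by rewrite /P /= setUAC.
Qed.

End ExtendNear.

End NonexpansiveGraphs.

Lemma nonexp_extension_near (R : realType) (X Y : Type)
    (dX : X -> X -> R) (dY : Y -> Y -> R)
    (hX : is_metric dX) (hY : is_metric dY) (hYc : hyperconvex dY)
    (A : set X) (g f : X -> Y) (r : R) :
  0 < r -> (forall a a', A a -> A a' -> dY (g a) (g a') <= dX a a') ->
  (forall x x', dY (f x) (f x') <= dX x x') ->
  (forall a, A a -> dY (f a) (g a) <= r) ->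
  exists g', [/\ forall x x', dY (g' x) (g' x') <= dX x x',
                 forall a, A a -> g' a = g a &
                 forall x, dY (f x) (g' x) <= r].
Proof.
move=> r_gt0 g_nonexp f_nonexp fg_near.
pose B := [set p : X * Y | A p.1 /\ p.2 = g p.1].
have hB : nonexp_graph dX dY B.
  by move=> [x y] [x' y'] [/= Ax ->] [/= Ax' ->]; exact: g_nonexp.
have nearB : graph_near dY f r B by move=> [x y] [/= Ax ->]; exact: fg_near.
have [G [BG hG nearG Gtot]] :=
  graph_near_total hX hY hYc r_gt0 f_nonexp hB nearB.
pose g' x := projT1 (cid (Gtot x)).
have Gg' x : G (x, g' x) by rewrite /g'; case: cid.
exists g'; split.
- by move=> x x'; exact: hG (Gg' x) (Gg' x').
- by move=> a Aa; apply: (nonexp_graph_fun hX hY hG (Gg' a)); apply: BG.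
- by move=> x; exact: nearG (Gg' x).
Qed.

Local Open Scope ereal_scope.

Lemma dsupC (R : realType) (X Y : Type) (dY : Y -> Y -> R) (hY : is_metric dY)
    (S : set X) (f g : X -> Y) :
  dsup dY S f g = dsup dY S g f.
Proof.
rewrite /dsup; congr (ereal_sup (image _ _)); apply/funext => x.
by rewrite (metricC hY).
Qed.

Lemma distset_Phi_le (R : realType) (X Y : Type)
    (dX : X -> X -> R) (dY : Y -> Y -> R)
    (hX : is_metric dX) (hY : is_metric dY) (hYc : hyperconvex dY)
    (A : set X) (hA : A !=set0) (f g f' : X -> Y)
    (hg : bdd_nonexp dX dY A g) :
  Phi dX dY A f f' -> distset dY f' (Phi dX dY A g) <= dsup dY A f g.
Proof.
move=> [[[y0 [M f'_bdd]] f'_nonexp] f'A].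
have [a0 Aa0] := hA.
have fg_le a : A a -> (dY (f a) (g a))%:E <= dsup dY A f g.
  by move=> Aa; apply: ereal_sup_ubound; exists a.
case Es : (dsup dY A f g) => [d| |] in fg_le *; last 2 first.
- exact: leey.
- by have := fg_le a0 Aa0.
have d_ge0 : (0 <= d)%R.
  by apply: le_trans (metric_ge0 hY (f a0) (g a0)) _; rewrite -lee_fin fg_le.
apply/lee_addgt0Pr => e e_gt0.
have [||g' [g'_nonexp g'A g'_near]] :=
  nonexp_extension_near hX hY hYc (r := (d + e)%R) _ hg.2 (fun x x' => f'_nonexp x x' I I).
- by rewrite ltr_wpDl.
- move=> a Aa; rewrite f'A //; apply: le_trans (_ : d <= _)%R.
    by rewrite -lee_fin; exact: fg_le.
  by rewrite lerDl ltW.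
apply: ge_ereal_inf; exists (dsup dY setT f' g').
  exists g' => //; split; last exact: g'A.
  split; last by move=> x x' _ _; exact: g'_nonexp.
  exists y0, (M + (d + e))%R => x _.
  apply: le_trans (metric_triangle hY _ (f' x) _) _.
  by rewrite (metricC hY) addrC lerD // f'_bdd.
by apply: ge_ereal_sup => _ [x _ <-]; rewrite -EFinD lee_fin.
Qed.

Theorem lemma5p3 (R : realType) (X Y : Type)
  (dX : X -> X -> R) (dY : Y -> Y -> R)
  (hX : is_metric dX) (hY : is_metric dY) (hyp : hyperconvex dY)
  (A : set X) (hA : A !=set0)
  (f g : X -> Y) (hf : bdd_nonexp dX dY A f) (hg : bdd_nonexp dX dY A g) :
  hausdorff dY (Phi dX dY A f) (Phi dX dY A g) <= dsup dY A f g.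
Proof.
rewrite /hausdorff ge_max; apply/andP; split.
  by apply: ge_ereal_sup => _ [f' Phif' <-]; exact: distset_Phi_le.
rewrite dsupC //; apply: ge_ereal_sup => _ [g' Phig' <-].
exact: distset_Phi_le.
Qed.
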